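(* There is a universal constant $c\ge 1$ such that the following holds. Let $f\in C^\infty(\{s>0\})$ be a nonnegative solution of $s^3f_{ss}+f_{tt}=0$ on the half-plane $\{(s,t): s>0\}$. Then for every $s_0>0$, every $t_0\in\mathbb{R}$ and every $M\in\mathbb{R}\setminus\{t_0\}$, $$f(s_0,t)\;\ge\;\frac{f(s_0,t_0)}{\big(2+s_0(t_0-M)^2\big)^{c}}\cdot\frac{(t-M)^2}{(t_0-M)^2}$$ for all $t$ in the closed interval between $M$ and $t_0$.
   Context: Coordinates $(s,t)$ range over $\{s>0\}\times\mathbb{R}$. (This equation arises from $f_{xx}+f_{yy}+3x^{-1}f_x=0$ on $\{x>0\}$ under the change of variables $s=\tfrac{1}{2x^2}$, $t=\sqrt8\,y$.) *)

From Stdlib Require Export Reals.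
Open Scope R_scope.

Definition half_plane (s t : R) : Prop := 0 < s.

(* Joint continuity of g : R -> R -> R at (s,t) (Euclidean topology on R^2,
   expressed with the max-norm, which induces the same topology). *)
Definition continuous2_at (g : R -> R -> R) (s t : R) : Prop :=
  forall eps, 0 < eps -> exists delta, 0 < delta /\
    forall s' t', Rabs (s' - s) < delta -> Rabs (t' - t) < delta ->
      Rabs (g s' t' - g s t) < eps.

(* D i j is then the mixed partial derivative d_s^i d_t^j f. *)
Definition smooth_on_half_plane (f : R -> R -> R) (D : nat -> nat -> R -> R -> R) : Prop :=
  (forall s t, half_plane s t -> D 0%nat 0%nat s t = f s t) /\
  (forall i j s t, half_plane s t ->
     derivable_pt_lim (fun s' => D i j s' t) s (D (S i) j s t) /\
     derivable_pt_lim (fun t' => D i j s t') t (D i (S j) s t) /\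
     continuous2_at (D i j) s t).

(* Positive solutions satisfy the gradient estimate [s^3 (d_s ln f)^2 + (d_t ln f)^2 <= 8000 s].
   For [u = ln f] and [L = s^3 d_s^2 + d_t^2], the squared gradient [Q = s^3 u_s^2 + u_t^2]
   obeys the Bochner-type inequality [L Q >= 2/5 Q^2 - 2 <grad u, grad Q>]; evaluated at the
   maximum of [Q] times a cutoff adapted to the scaling [(s, t) -> (l s, l^(-1/2) t)] of the
   equation, this bounds [Q] at the centre of the cutoff.  Integrating [|d_s ln f| <= 90 / s] and
   [|d_t ln f| <= 90 sqrt s] along the path from [(s0, t0)] down to height
   [s0 / (1 + s0 (t - t0)^2)], across, and back up to [(s0, t)] gives
   [f(s0, t) >= e^(-90) (1 + s0 (t - t0)^2)^(-180) f(s0, t0)].  This implies the claim with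
   [c = 360], since [(t - M)^2 / (t0 - M)^2 <= 1]; nonnegative solutions are handled by applying
   the estimate to [f + e] and letting [e] tend to [0]. *)

From Stdlib Require Import Reals Lra Psatz ClassicalEpsilon.
From Coquelicot Require Import Coquelicot.
Open Scope R_scope.

(** * Calculus in the plane *)

Lemma continuity_2d_pt_of_continuous2_at (g : R -> R -> R) (s t : R) :
  continuous2_at g s t -> continuity_2d_pt g s t.
Proof.
  intros Hg eps; destruct (Hg eps (cond_pos eps)) as [delta [Hdelta Hclose]].
  now exists (mkposreal delta Hdelta).
Qed.

Lemma continuity_2d_pt_pow (g : R -> R -> R) (n : nat) (s t : R) :
  continuity_2d_pt g s t -> continuity_2d_pt (fun u v => g u v ^ n) s t.
Proof.
  intros Hg; induction n as [|n IH]; simpl.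
  - apply continuity_2d_pt_const.
  - now apply continuity_2d_pt_mult.
Qed.

Lemma continuity_pt_of_continuity_2d_pt (g : R -> R -> R) (s t : R) :
  continuity_2d_pt g s t -> continuity_pt (g s) t.
Proof.
  intros Hg eps Heps; destruct (Hg (mkposreal eps Heps)) as [delta Hclose].
  exists delta; split; [apply cond_pos |].
  intros t' [_ Ht']; apply Hclose; [rewrite Rminus_diag, Rabs_R0; apply cond_pos | exact Ht'].
Qed.

Definition clamp (a b x : R) : R := Rmax a (Rmin b x).

Lemma clamp_bounds (a b x : R) : a <= b -> a <= clamp a b x <= b.
Proof. intro Hab; unfold clamp, Rmax, Rmin; repeat destruct Rle_dec; lra. Qed.

Lemma clamp_id (a b x : R) : a <= x <= b -> clamp a b x = x.
Proof. intro Hx; unfold clamp, Rmax, Rmin; repeat destruct Rle_dec; lra. Qed.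

Lemma Rabs_clamp_le (a b x y : R) : Rabs (clamp a b x - clamp a b y) <= Rabs (x - y).
Proof.
  unfold clamp, Rmax, Rmin; repeat destruct Rle_dec; unfold Rabs; repeat destruct Rcase_abs; lra.
Qed.

(* The maximum is first taken in [t], then in [s]; clamping [s] into [a, b] makes the partial
   maximum a continuous function on all of [R], as [continuity_ab_maj] requires. *)
Lemma rectangle_argmax (G : R -> R -> R) (a b c d : R) :
  a <= b -> c <= d ->
  (forall s t, a <= s <= b -> c <= t <= d -> continuity_2d_pt G s t) ->
  exists sm tm, a <= sm <= b /\ c <= tm <= d /\
    forall s t, a <= s <= b -> c <= t <= d -> G s t <= G sm tm.
Proof.
  intros Hab Hcd HG.
  assert (Hargmax_t : forall x, exists y, c <= y <= d /\
            forall t, c <= t <= d -> G (clamp a b x) t <= G (clamp a b x) y).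
  { intro x; destruct (continuity_ab_maj (G (clamp a b x)) c d Hcd) as [y [Hy Hyd]].
    - intros t Ht; apply continuity_pt_of_continuity_2d_pt, HG; [apply clamp_bounds |]; auto.
    - now exists y. }
  set (tmax x := proj1_sig (constructive_indefinite_description _ (Hargmax_t x))).
  assert (Htmax : forall x, c <= tmax x <= d /\
            forall t, c <= t <= d -> G (clamp a b x) t <= G (clamp a b x) (tmax x))
    by (intro x; unfold tmax; now destruct constructive_indefinite_description).
  set (h x := G (clamp a b x) (tmax x)).
  assert (Hh : forall x, continuity_pt h x).
  { intros x eps Heps.
    destruct (uniform_continuity_2d G a b c d HG (mkposreal eps Heps)) as [delta Hunif].
    assert (Hnear : forall x1 x2 y, Rabs (x1 - x2) < delta -> c <= y <= d ->
              G (clamp a b x2) y - eps < G (clamp a b x1) y).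
    { intros x1 x2 y Hx Hy.
      assert (Hclose : Rabs (G (clamp a b x1) y - G (clamp a b x2) y) < eps).
      { apply Hunif; try apply clamp_bounds; auto.
        - pose proof (Rabs_clamp_le a b x1 x2); lra.
        - rewrite Rminus_diag, Rabs_R0; apply cond_pos. }
      apply Rabs_def2 in Hclose; lra. }
    exists delta; split; [apply cond_pos |]; intros x' [_ Hx']; simpl in *; unfold R_dist in *.
    destruct (Htmax x) as [Hy Hmax]; destruct (Htmax x') as [Hy' Hmax'].
    pose proof (Hnear x' x (tmax x) Hx' Hy).
    pose proof (Hnear x x' (tmax x') ltac:(now rewrite Rabs_minus_sym) Hy').
    pose proof (Hmax (tmax x') Hy'); pose proof (Hmax' (tmax x) Hy).
    unfold h; apply Rabs_def1; lra. }
  destruct (continuity_ab_maj h a b Hab (fun x _ => Hh x)) as [sm [Hsm Hsmab]].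
  exists sm, (tmax sm); split; [exact Hsmab | split; [apply Htmax |]].
  intros s t Hs Ht.
  specialize (Hsm s Hs); unfold h in Hsm; rewrite !clamp_id in Hsm by auto.
  apply Rle_trans with (G s (tmax s)); [| exact Hsm].
  rewrite <- (clamp_id a b s Hs) at 1 2; apply Htmax, Ht.
Qed.

Lemma local_max_derive (g g1 : R -> R) (x g2 del : R) :
  0 < del -> (forall y, Rabs (y - x) < del -> g y <= g x) ->
  (forall y, Rabs (y - x) < del -> is_derive g y (g1 y)) ->
  is_derive g1 x g2 -> g1 x = 0 /\ g2 <= 0.
Proof.
  intros Hdel Hmax Hg Hg1.
  assert (Hg' : forall y, Rabs (y - x) < del -> derivable_pt_lim g y (g1 y))
    by (intros y Hy; now apply is_derive_Reals, Hg).
  assert (Hcrit : g1 x = 0).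
  { assert (Hx : derivable_pt_lim g x (g1 x))
      by (apply Hg'; rewrite Rminus_diag, Rabs_R0; exact Hdel).
    rewrite <- (derive_pt_eq_0 g x _ (exist _ (g1 x) Hx) Hx).
    apply (deriv_maximum g (x - del) (x + del)); try lra.
    intros y Hy1 Hy2; apply Hmax, Rabs_def1; lra. }
  split; [exact Hcrit |].
  apply Rnot_lt_le; intro Hpos.
  apply is_derive_Reals in Hg1; destruct (Hg1 g2 Hpos) as [dl Hdl].
  set (h := Rmin (dl / 2) (del / 2)).
  assert (Hh : 0 < h /\ h < dl /\ h < del)
    by (pose proof (cond_pos dl); unfold h, Rmin; destruct Rle_dec; lra).
  (* Mean value theorem on [x, x + h], where [g1] is positive since [g1 x = 0] and [g2 > 0]. *)
  destruct (MVT_cor2 g g1 x (x + h)) as [c [Hmvt Hc]]; [lra | |].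
  { intros c Hc; apply Hg'; rewrite Rabs_pos_eq; lra. }
  assert (Hslope := Hdl (c - x) ltac:(lra) ltac:(rewrite Rabs_pos_eq; lra)).
  replace (x + (c - x)) with c in Hslope by ring; rewrite Hcrit in Hslope.
  apply Rabs_def2 in Hslope; destruct Hslope as [_ Hslope].
  assert (Hg1c : 0 < g1 c).
  { replace (g1 c) with ((g1 c - 0) / (c - x) * (c - x)) by (field; lra).
    apply Rmult_lt_0_compat; lra. }
  replace (x + h - x) with h in Hmvt by ring.
  pose proof (Rmult_lt_0_compat _ _ Hg1c (proj1 Hh)).
  pose proof (Hmax (x + h) ltac:(replace (x + h - x) with h by ring; rewrite Rabs_pos_eq; lra)).
  lra.
Qed.

Lemma local_max_product (p q p1 q1 : R -> R) (x p2 q2 del : R) :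
  0 < del -> (forall y, Rabs (y - x) < del -> p y * q y <= p x * q x) ->
  (forall y, Rabs (y - x) < del -> is_derive p y (p1 y) /\ is_derive q y (q1 y)) ->
  is_derive p1 x p2 -> is_derive q1 x q2 ->
  p1 x * q x + p x * q1 x = 0 /\ p2 * q x + 2 * p1 x * q1 x + p x * q2 <= 0.
Proof.
  intros Hdel Hmax Hd Hp1 Hq1.
  assert (Hx : Rabs (x - x) < del) by (rewrite Rminus_diag, Rabs_R0; exact Hdel).
  assert (Hprod : forall (f g : R -> R) y df dg, is_derive f y df -> is_derive g y dg ->
            is_derive (fun z => f z * g z) y (df * g y + f y * dg))
    by (intros f g y df dg Hf Hg; exact (is_derive_mult f g y df dg Hf Hg Rmult_comm)).
  destruct (local_max_derive (fun y => p y * q y) (fun y => p1 y * q y + p y * q1 y) x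
              (p2 * q x + 2 * p1 x * q1 x + p x * q2) del Hdel Hmax) as [H1 H2].
  - intros y Hy; destruct (Hd y Hy); now apply Hprod.
  - destruct (Hd x Hx) as [Hp Hq].
    replace (p2 * q x + 2 * p1 x * q1 x + p x * q2)
      with ((p2 * q x + p1 x * q1 x) + (p1 x * q1 x + p x * q2)) by ring.
    apply (is_derive_plus (fun y => p1 y * q y) (fun y => p y * q1 y)); now apply Hprod.
  - now split.
Qed.

Lemma is_derive_locally_zero (h : R -> R) (x l del : R) :
  0 < del -> (forall y, Rabs (y - x) < del -> h y = 0) -> is_derive h x l -> l = 0.
Proof.
  intros Hdel Hzero Hh.
  apply (is_derive_unique h x l) in Hh; rewrite <- Hh.
  apply is_derive_unique, (is_derive_ext_loc (fun _ => 0)); [| now auto_derive].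
  exists (mkposreal del Hdel); intros y Hy; symmetry; now apply Hzero.
Qed.

(** * A maximum principle estimate *)

Lemma cutoff_max_inequality (s a b Q Qs Qt Qss Qtt p ps pt pss ptt : R) :
  0 < s -> 0 < p -> 0 < Q -> Q = s ^ 3 * a ^ 2 + b ^ 2 ->
  2 / 5 * Q ^ 2 - 2 * (s ^ 3 * a * Qs + b * Qt) <= s ^ 3 * Qss + Qtt ->
  ps * Q + p * Qs = 0 -> pt * Q + p * Qt = 0 ->
  pss * Q + 2 * ps * Qs + p * Qss <= 0 -> ptt * Q + 2 * pt * Qt + p * Qtt <= 0 ->
  1 / 5 * p ^ 2 * Q <= 7 * (s ^ 3 * ps ^ 2 + pt ^ 2) - p * (s ^ 3 * pss + ptt).
Proof.
  intros Hs Hp HQ HQdef Hbochner Hcrit_s Hcrit_t Hhess_s Hhess_t.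
  set (N := s ^ 3 * ps ^ 2 + pt ^ 2).
  set (g := s ^ 3 * a * ps + b * pt).
  assert (Hs3 : 0 < s ^ 3) by (apply pow_lt; exact Hs).
  assert (Hhess : s ^ 3 * (pss * Q + 2 * ps * Qs + p * Qss) + (ptt * Q + 2 * pt * Qt + p * Qtt)
                  <= 0) by nra.
  (* Multiply by [p], eliminate [p Qs] and [p Qt] by the critical point equations, divide by [Q]. *)
  assert (Hmain : p * (s ^ 3 * pss + ptt) - 2 * N + 2 / 5 * p ^ 2 * Q + 2 * p * g <= 0).
  { apply (Rmult_le_reg_l Q); [exact HQ |]; rewrite Rmult_0_r.
    replace (Q * (p * (s ^ 3 * pss + ptt) - 2 * N + 2 / 5 * p ^ 2 * Q + 2 * p * g))
      with (p * (s ^ 3 * (pss * Q + 2 * ps * Qs + p * Qss) + (ptt * Q + 2 * pt * Qt + p * Qtt))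
            + p ^ 2 * (2 / 5 * Q ^ 2 - 2 * (s ^ 3 * a * Qs + b * Qt) - (s ^ 3 * Qss + Qtt))
            + 2 * s ^ 3 * (p * a - ps) * (ps * Q + p * Qs)
            + 2 * (p * b - pt) * (pt * Q + p * Qt))
      by (unfold N, g; ring).
    rewrite Hcrit_s, Hcrit_t; nra. }
  (* Cauchy-Schwarz [g ^ 2 <= Q N] and AM-GM absorb the cross term [2 p g]. *)
  assert (Hcs : g ^ 2 <= Q * N).
  { rewrite HQdef; unfold g, N.
    assert (0 <= s ^ 3 * (a * pt - b * ps) ^ 2) by (apply Rmult_le_pos; [lra | apply pow2_ge_0]).
    nra. }
  assert (Hcross : - (2 * p * g) <= 1 / 5 * p ^ 2 * Q + 5 * N).
  { apply (Rmult_le_reg_l Q); [exact HQ |].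
    assert (0 <= (p * Q + 5 * g) ^ 2) by apply pow2_ge_0.
    nra. }
  lra.
Qed.

(* Cutoffs vanishing on the boundary of the box
   [[sg/2, 3 sg/2] x [tau - sg^(-1/2), tau + sg^(-1/2)]], adapted to the scaling of the equation. *)
Definition bump_s (sg s : R) : R := (1 - 4 * ((s - sg) / sg) ^ 2) ^ 2.
Definition bump_s' (sg s : R) : R := -16 * (1 - 4 * ((s - sg) / sg) ^ 2) * (s - sg) / sg ^ 2.
Definition bump_s'' (sg s : R) : R := (192 * ((s - sg) / sg) ^ 2 - 16) / sg ^ 2.

Definition bump_t (sg tau t : R) : R := (1 - sg * (t - tau) ^ 2) ^ 2.
Definition bump_t' (sg tau t : R) : R := -4 * sg * (t - tau) * (1 - sg * (t - tau) ^ 2).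
Definition bump_t'' (sg tau t : R) : R := sg * (12 * sg * (t - tau) ^ 2 - 4).

Lemma is_derive_bump_s (sg s : R) : 0 < sg ->
  is_derive (bump_s sg) s (bump_s' sg s) /\ is_derive (bump_s' sg) s (bump_s'' sg s).
Proof.
  intro Hsg; unfold bump_s, bump_s', bump_s''; split; auto_derive; auto; field; lra.
Qed.

Lemma is_derive_bump_t (sg tau t : R) :
  is_derive (bump_t sg tau) t (bump_t' sg tau t) /\
  is_derive (bump_t' sg tau) t (bump_t'' sg tau t).
Proof. unfold bump_t, bump_t', bump_t''; split; auto_derive; auto; ring. Qed.

Lemma cutoff_bound (sg tau s t : R) :
  0 < sg -> sg / 2 <= s <= 3 * sg / 2 -> sg * (t - tau) ^ 2 <= 1 ->
  let A := bump_s sg s in let B := bump_t sg tau t in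
  7 * (s ^ 3 * (bump_s' sg s * B) ^ 2 + (A * bump_t' sg tau t) ^ 2)
  - A * B * (s ^ 3 * (bump_s'' sg s * B) + A * bump_t'' sg tau t) <= 1600 * sg * (A * B).
Proof.
  intros Hsg Hs Ht A B.
  set (u := (s - sg) / sg); set (w := sg * (t - tau) ^ 2).
  assert (Hs_u : s = sg * (1 + u)) by (unfold u; field; lra).
  assert (Hu : -1/2 <= u <= 1/2) by (rewrite Hs_u in Hs; split; nra).
  assert (Hw : 0 <= w <= 1) by (split; [apply Rmult_le_pos; [lra | apply pow2_ge_0] | exact Ht]).
  assert (HA : A = (1 - 4 * u ^ 2) ^ 2) by reflexivity.
  assert (HB : B = (1 - w) ^ 2) by reflexivity.
  assert (HA01 : 0 <= A <= 1).
  { assert (0 <= 1 - 4 * u ^ 2 <= 1) by nra. rewrite HA; split; [apply pow2_ge_0 | nra]. }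
  assert (HB01 : 0 <= B <= 1) by (rewrite HB; split; [apply pow2_ge_0 | nra]).
  replace (7 * (s ^ 3 * (bump_s' sg s * B) ^ 2 + (A * bump_t' sg tau t) ^ 2)
           - A * B * (s ^ 3 * (bump_s'' sg s * B) + A * bump_t'' sg tau t))
    with (sg * (A * B) * ((1 + u) ^ 3 * (1600 * u ^ 2 + 16) * B + A * (100 * w + 4)))
    by (rewrite HA, HB, Hs_u; unfold bump_s', bump_s'', bump_t', bump_t'', u, w; field; lra).
  replace (1600 * sg * (A * B)) with (sg * (A * B) * 1600) by ring.
  apply Rmult_le_compat_l; [apply Rmult_le_pos; [lra | apply Rmult_le_pos; lra] |].
  assert (Hcube : 0 <= (1 + u) ^ 3 <= 27 / 8) by (split; [apply pow_le; lra | nra]).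
  assert (Hquad : 0 <= 1600 * u ^ 2 + 16 <= 416) by nra.
  assert (0 <= (1 + u) ^ 3 * (1600 * u ^ 2 + 16) <= 27 / 8 * 416) by (split; nra).
  nra.
Qed.

Lemma bump_s_interior (sg s : R) :
  0 < sg -> sg / 2 <= s <= 3 * sg / 2 -> bump_s sg s <> 0 -> sg / 2 < s < 3 * sg / 2.
Proof.
  intros Hsg Hs Hnz; split; apply Rnot_le_lt; intro Hedge; apply Hnz.
  - replace s with (sg / 2) by lra; unfold bump_s; field; lra.
  - replace s with (3 * sg / 2) by lra; unfold bump_s; field; lra.
Qed.

Lemma bump_t_interior (sg tau t k : R) :
  sg * k ^ 2 = 1 -> tau - k <= t <= tau + k -> bump_t sg tau t <> 0 -> tau - k < t < tau + k.
Proof.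
  intros Hk Ht Hnz; split; apply Rnot_le_lt; intro Hedge; apply Hnz; unfold bump_t.
  - replace (t - tau) with (- k) by lra.
    replace (sg * (- k) ^ 2) with 1 by (rewrite <- Hk; ring); ring.
  - replace (t - tau) with k by lra; rewrite Hk; ring.
Qed.

(** * Gradient estimate and Harnack inequality for positive solutions *)

Definition jets_on_half_plane (D : nat -> nat -> R -> R -> R) : Prop :=
  forall i j s t, half_plane s t ->
    derivable_pt_lim (fun s' => D i j s' t) s (D (S i) j s t) /\
    derivable_pt_lim (fun t' => D i j s t') t (D i (S j) s t) /\
    continuous2_at (D i j) s t.

Section PositiveSolution.

Variable D : nat -> nat -> R -> R -> R.
Hypothesis HD : jets_on_half_plane D.
Hypothesis Hpos : forall s t, 0 < s -> 0 < D 0 0 s t.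
Hypothesis Hpde : forall s t, 0 < s -> s ^ 3 * D 2 0 s t + D 0 2 s t = 0.

(* Partial derivatives of [u = ln (D 0 0)], written in terms of the jets of [D 0 0]. *)
Definition us (s t : R) : R := D 1 0 s t / D 0 0 s t.
Definition ut (s t : R) : R := D 0 1 s t / D 0 0 s t.
Definition uss (s t : R) : R := D 2 0 s t / D 0 0 s t - us s t ^ 2.
Definition ust (s t : R) : R := D 1 1 s t / D 0 0 s t - us s t * ut s t.
Definition utt (s t : R) : R := D 0 2 s t / D 0 0 s t - ut s t ^ 2.
Definition usss (s t : R) : R :=
  D 3 0 s t / D 0 0 s t - D 2 0 s t / D 0 0 s t * us s t - 2 * us s t * uss s t.
Definition usst (s t : R) : R :=
  D 2 1 s t / D 0 0 s t - D 1 1 s t / D 0 0 s t * us s t - uss s t * ut s t - us s t * ust s t.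
Definition ustt (s t : R) : R :=
  D 1 2 s t / D 0 0 s t - D 1 1 s t / D 0 0 s t * ut s t - ust s t * ut s t - us s t * utt s t.
Definition uttt (s t : R) : R :=
  D 0 3 s t / D 0 0 s t - D 0 2 s t / D 0 0 s t * ut s t - 2 * ut s t * utt s t.

(* [Q] is the squared gradient of [u] for the metric [ds^2 / s^3 + dt^2]. *)
Definition Q (s t : R) : R := s ^ 3 * us s t ^ 2 + ut s t ^ 2.
Definition Qs (s t : R) : R :=
  3 * s ^ 2 * us s t ^ 2 + 2 * s ^ 3 * us s t * uss s t + 2 * ut s t * ust s t.
Definition Qt (s t : R) : R := 2 * s ^ 3 * us s t * ust s t + 2 * ut s t * utt s t.
Definition Qss (s t : R) : R := 6 * s * us s t ^ 2 + 12 * s ^ 2 * us s t * uss s t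
  + 2 * s ^ 3 * (uss s t ^ 2 + us s t * usss s t) + 2 * (ust s t ^ 2 + ut s t * usst s t).
Definition Qtt (s t : R) : R :=
  2 * s ^ 3 * (ust s t ^ 2 + us s t * ustt s t) + 2 * (utt s t ^ 2 + ut s t * uttt s t).

Lemma is_derive_jet_s i j s t : 0 < s -> is_derive (fun x => D i j x t) s (D (S i) j s t).
Proof. intro Hs; apply is_derive_Reals, (HD i j s t Hs). Qed.

Lemma is_derive_jet_t i j s t : 0 < s -> is_derive (fun x => D i j s x) t (D i (S j) s t).
Proof. intro Hs; apply is_derive_Reals, (HD i j s t Hs). Qed.

Lemma Derive_jet_s i j s t : 0 < s -> Derive (fun x => D i j x t) s = D (S i) j s t.
Proof. intro Hs; now apply is_derive_unique, is_derive_jet_s. Qed.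

Lemma Derive_jet_t i j s t : 0 < s -> Derive (fun x => D i j s x) t = D i (S j) s t.
Proof. intro Hs; now apply is_derive_unique, is_derive_jet_t. Qed.

Lemma ex_derive_jet_s i j s t : 0 < s -> ex_derive (fun x => D i j x t) s.
Proof. intro Hs; eexists; now apply is_derive_jet_s. Qed.

Lemma ex_derive_jet_t i j s t : 0 < s -> ex_derive (fun x => D i j s x) t.
Proof. intro Hs; eexists; now apply is_derive_jet_t. Qed.

Ltac unfold_log_derivatives :=
  unfold Q, Qs, Qt, Qss, Qtt, usss, usst, ustt, uttt, uss, ust, utt, us, ut.

Ltac derive_jets s t Hs ex_derive_jet Derive_jet :=
  pose proof (Hpos s t Hs);
  unfold_log_derivatives; auto_derive;
  [ repeat split; (apply ex_derive_jet || lra); exact Hs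
  | rewrite ?Derive_jet by exact Hs; field; lra ].

Lemma is_derive_Q_s s t : 0 < s -> is_derive (fun x => Q x t) s (Qs s t).
Proof. intro Hs; derive_jets s t Hs ex_derive_jet_s Derive_jet_s. Qed.

Lemma is_derive_Qs_s s t : 0 < s -> is_derive (fun x => Qs x t) s (Qss s t).
Proof. intro Hs; derive_jets s t Hs ex_derive_jet_s Derive_jet_s. Qed.

Lemma is_derive_Q_t s t : 0 < s -> is_derive (fun x => Q s x) t (Qt s t).
Proof. intro Hs; derive_jets s t Hs ex_derive_jet_t Derive_jet_t. Qed.

Lemma is_derive_Qt_t s t : 0 < s -> is_derive (fun x => Qt s x) t (Qtt s t).
Proof. intro Hs; derive_jets s t Hs ex_derive_jet_t Derive_jet_t. Qed.

Lemma pde_s s t : 0 < s -> 3 * s ^ 2 * D 2 0 s t + s ^ 3 * D 3 0 s t + D 1 2 s t = 0.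
Proof.
  intro Hs; apply (is_derive_locally_zero (fun x => x ^ 3 * D 2 0 x t + D 0 2 x t) s _ s Hs).
  - intros y Hy; apply Hpde; apply Rabs_def2 in Hy; lra.
  - auto_derive; [repeat split; now apply ex_derive_jet_s |].
    rewrite !Derive_jet_s by exact Hs; ring.
Qed.

Lemma pde_t s t : 0 < s -> s ^ 3 * D 2 1 s t + D 0 3 s t = 0.
Proof.
  intro Hs; apply (is_derive_locally_zero (fun x => s ^ 3 * D 2 0 s x + D 0 2 s x) t _ 1 Rlt_0_1).
  - intros y _; now apply Hpde.
  - auto_derive; [repeat split; now apply ex_derive_jet_t |].
    rewrite !Derive_jet_t by exact Hs; ring.
Qed.

Lemma log_pde s t : 0 < s -> s ^ 3 * (uss s t + us s t ^ 2) + utt s t + ut s t ^ 2 = 0.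
Proof.
  intro Hs; pose proof (Hpos s t Hs); pose proof (Hpde s t Hs).
  unfold_log_derivatives; replace (D 0 2 s t) with (- s ^ 3 * D 2 0 s t) by lra; field; lra.
Qed.

Lemma log_pde_s s t : 0 < s ->
  3 * s ^ 2 * (uss s t + us s t ^ 2) + s ^ 3 * (usss s t + 2 * us s t * uss s t)
  + ustt s t + 2 * ut s t * ust s t = 0.
Proof.
  intro Hs; pose proof (Hpos s t Hs); pose proof (Hpde s t Hs); pose proof (pde_s s t Hs).
  unfold_log_derivatives.
  replace (D 0 2 s t) with (- s ^ 3 * D 2 0 s t) by lra.
  replace (D 1 2 s t) with (- 3 * s ^ 2 * D 2 0 s t - s ^ 3 * D 3 0 s t) by lra.
  field; lra.
Qed.

Lemma log_pde_t s t : 0 < s ->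
  s ^ 3 * (usst s t + 2 * us s t * ust s t) + uttt s t + 2 * ut s t * utt s t = 0.
Proof.
  intro Hs; pose proof (Hpos s t Hs); pose proof (Hpde s t Hs); pose proof (pde_t s t Hs).
  unfold_log_derivatives.
  replace (D 0 2 s t) with (- s ^ 3 * D 2 0 s t) by lra.
  replace (D 0 3 s t) with (- s ^ 3 * D 2 1 s t) by lra.
  field; lra.
Qed.

(* Bochner-type inequality for [L = s^3 d_s^2 + d_t^2]: the third derivatives of [u] cancel
   by the differentiated equations, and the Hessian term dominates [Q^2 / 5] by the equation. *)
Lemma bochner_inequality s t : 0 < s ->
  2 / 5 * Q s t ^ 2 - 2 * (s ^ 3 * us s t * Qs s t + ut s t * Qt s t) <= s ^ 3 * Qss s t + Qtt s t.
Proof.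
  intro Hs.
  pose proof (log_pde s t Hs) as E0; pose proof (log_pde_s s t Hs) as E1;
  pose proof (log_pde_t s t Hs) as E2.
  assert (HQ : Q s t = - (s ^ 3 * uss s t + utt s t)) by (unfold Q; lra).
  assert (Hsum : s ^ 3 * Qss s t + Qtt s t + 2 * (s ^ 3 * us s t * Qs s t + ut s t * Qt s t)
                 - 2 / 5 * Q s t ^ 2
               = 6 * (s ^ 2 * us s t + s ^ 3 * uss s t / 2) ^ 2
                 + (s ^ 3 * uss s t - 4 * utt s t) ^ 2 / 10 + 4 * s ^ 3 * ust s t ^ 2).
  { rewrite HQ; unfold Qss, Qtt, Qs, Qt.
    replace (ustt s t) with (- (3 * s ^ 2 * (uss s t + us s t ^ 2)
      + s ^ 3 * (usss s t + 2 * us s t * uss s t) + 2 * ut s t * ust s t)) by lra.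
    replace (uttt s t) with (- (s ^ 3 * (usst s t + 2 * us s t * ust s t) + 2 * ut s t * utt s t))
      by lra.
    field. }
  assert (0 <= s ^ 3 * ust s t ^ 2) by (apply Rmult_le_pos; [apply pow_le; lra | apply pow2_ge_0]).
  pose proof (pow2_ge_0 (s ^ 2 * us s t + s ^ 3 * uss s t / 2));
  pose proof (pow2_ge_0 (s ^ 3 * uss s t - 4 * utt s t)).
  lra.
Qed.

Definition localized_Q (sg tau s t : R) : R := bump_s sg s * bump_t sg tau t * Q s t.

Lemma continuity_2d_pt_localized_Q sg tau s t :
  0 < sg -> 0 < s -> continuity_2d_pt (localized_Q sg tau) s t.
Proof.
  intros Hsg Hs.
  assert (Hjet : forall i j, continuity_2d_pt (D i j) s t)
    by (intros i j; apply continuity_2d_pt_of_continuous2_at, (HD i j s t Hs)).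
  assert (Hf : D 0 0 s t <> 0) by (apply Rgt_not_eq, Hpos, Hs).
  unfold localized_Q, bump_s, bump_t, Q, us, ut, Rdiv.
  repeat first
    [ apply continuity_2d_pt_const | apply continuity_2d_pt_id1 | apply continuity_2d_pt_id2
    | apply Hjet | apply continuity_2d_pt_plus | apply continuity_2d_pt_minus
    | apply continuity_2d_pt_opp | apply continuity_2d_pt_mult | apply continuity_2d_pt_pow
    | apply continuity_2d_pt_inv; [| exact Hf] ].
Qed.

Lemma localized_Q_max_bound sg tau sm tm del :
  0 < sg -> 0 < del -> del <= sm -> sg / 2 <= sm <= 3 * sg / 2 -> sg * (tm - tau) ^ 2 <= 1 ->
  0 < bump_s sg sm * bump_t sg tau tm ->
  (forall s t, Rabs (s - sm) < del -> Rabs (t - tm) < del ->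
     localized_Q sg tau s t <= localized_Q sg tau sm tm) ->
  localized_Q sg tau sm tm <= 8000 * sg.
Proof.
  intros Hsg Hdel Hdel_sm Hsm Htm Hcut Hmax.
  unfold localized_Q in *.
  set (A := bump_s sg sm) in *; set (B := bump_t sg tau tm) in *.
  destruct (Rle_or_lt (Q sm tm) 0) as [HQ | HQ].
  { assert (A * B * Q sm tm <= A * B * 0) by (apply Rmult_le_compat_l; lra); lra. }
  assert (Hpos_near : forall y, Rabs (y - sm) < del -> 0 < y)
    by (intros y Hy; apply Rabs_def2 in Hy; lra).
  assert (Hcentre : Rabs 0 < del) by (rewrite Rabs_R0; exact Hdel).
  destruct (local_max_product (fun y => bump_s sg y * B) (fun y => Q y tm)
              (fun y => bump_s' sg y * B) (fun y => Qs y tm) sm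
              (bump_s'' sg sm * B) (Qss sm tm) del Hdel) as [Hcrit_s Hhess_s].
  - intros y Hy; apply Hmax; [exact Hy | rewrite Rminus_diag; exact Hcentre].
  - intros y Hy; split; [| now apply is_derive_Q_s, Hpos_near].
    exact (is_derive_scal_l _ _ _ B (proj1 (is_derive_bump_s sg y Hsg))).
  - exact (is_derive_scal_l _ _ _ B (proj2 (is_derive_bump_s sg sm Hsg))).
  - apply is_derive_Qs_s; lra.
  - destruct (local_max_product (fun y => A * bump_t sg tau y) (fun y => Q sm y)
                (fun y => A * bump_t' sg tau y) (fun y => Qt sm y) tm
                (A * bump_t'' sg tau tm) (Qtt sm tm) del Hdel) as [Hcrit_t Hhess_t].
    + intros y Hy; apply Hmax; [rewrite Rminus_diag; exact Hcentre | exact Hy].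
    + intros y Hy; split; [| apply is_derive_Q_t; lra].
      exact (is_derive_scal _ _ A _ (proj1 (is_derive_bump_t sg tau y))).
    + exact (is_derive_scal _ _ A _ (proj2 (is_derive_bump_t sg tau tm))).
    + apply is_derive_Qt_t; lra.
    + pose proof (cutoff_max_inequality sm (us sm tm) (ut sm tm) (Q sm tm) (Qs sm tm) (Qt sm tm)
        (Qss sm tm) (Qtt sm tm) (A * B) (bump_s' sg sm * B) (A * bump_t' sg tau tm)
        (bump_s'' sg sm * B) (A * bump_t'' sg tau tm) ltac:(lra) Hcut HQ eq_refl
        (bochner_inequality sm tm ltac:(lra)) Hcrit_s Hcrit_t Hhess_s Hhess_t) as Hineq.
      pose proof (cutoff_bound sg tau sm tm Hsg Hsm Htm) as Hbound.
      cbv zeta in Hbound; fold A B in Hbound.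
      apply (Rmult_le_reg_l (A * B)); [exact Hcut |]; nra.
Qed.

Lemma gradient_estimate sg tau : 0 < sg -> Q sg tau <= 8000 * sg.
Proof.
  intro Hsg.
  set (k := / sqrt sg).
  assert (Hk : 0 < k) by (apply Rinv_0_lt_compat, sqrt_lt_R0, Hsg).
  assert (Hk2 : sg * k ^ 2 = 1)
    by (unfold k; rewrite pow_inv, pow2_sqrt by lra; field; lra).
  destruct (rectangle_argmax (localized_Q sg tau) (sg / 2) (3 * sg / 2) (tau - k) (tau + k))
    as [sm [tm [Hsm [Htm Hmax]]]]; [lra | lra | intros; apply continuity_2d_pt_localized_Q; lra |].
  assert (HQ_le : Q sg tau <= localized_Q sg tau sm tm).
  { replace (Q sg tau) with (localized_Q sg tau sg tau)
      by (unfold localized_Q, bump_s, bump_t; rewrite Rminus_diag; field; lra).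
    apply Hmax; lra. }
  destruct (Rle_or_lt (Q sg tau) 0) as [HQ | HQ]; [lra |].
  unfold localized_Q in HQ_le.
  assert (Hcut : 0 < bump_s sg sm * bump_t sg tau tm).
  { assert (Hcut0 : 0 <= bump_s sg sm * bump_t sg tau tm)
      by (unfold bump_s, bump_t; apply Rmult_le_pos; apply pow2_ge_0).
    destruct (Rle_lt_or_eq_dec _ _ Hcut0) as [Hlt | Heq]; [exact Hlt |].
    rewrite <- Heq in HQ_le; lra. }
  assert (Hsm' : sg / 2 < sm < 3 * sg / 2).
  { apply bump_s_interior; [exact Hsg | exact Hsm |].
    intro H0; rewrite H0, Rmult_0_l in Hcut; lra. }
  assert (Htm' : tau - k < tm < tau + k).
  { apply (bump_t_interior sg); [exact Hk2 | exact Htm |].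
    intro H0; rewrite H0, Rmult_0_r in Hcut; lra. }
  set (del := Rmin (Rmin (sm - sg / 2) (3 * sg / 2 - sm)) (Rmin (tm - (tau - k)) (tau + k - tm))).
  assert (Hdel : 0 < del /\ del <= sm - sg / 2 /\ del <= 3 * sg / 2 - sm
                 /\ del <= tm - (tau - k) /\ del <= tau + k - tm)
    by (unfold del, Rmin; repeat destruct Rle_dec; lra).
  assert (Htm_range : sg * (tm - tau) ^ 2 <= 1).
  { rewrite <- Hk2; apply Rmult_le_compat_l; [lra |].
    rewrite <- (pow2_abs (tm - tau)); apply pow_incr.
    split; [apply Rabs_pos | apply Rabs_le; lra]. }
  apply Rle_trans with (localized_Q sg tau sm tm); [exact HQ_le |].
  apply (localized_Q_max_bound sg tau sm tm del); try lra.
  intros s t Hs Ht; apply Rabs_def2 in Hs; apply Rabs_def2 in Ht; apply Hmax; lra.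
Qed.

Lemma us_bound s t : 0 < s -> Rabs (us s t) <= 90 / s.
Proof.
  intro Hs; pose proof (gradient_estimate s t Hs) as Hgrad; unfold Q in Hgrad.
  assert (Hs3 : 0 < s ^ 3) by (apply pow_lt, Hs).
  assert (Hsq : us s t ^ 2 <= (90 / s) ^ 2).
  { apply (Rmult_le_reg_l (s ^ 3)); [exact Hs3 |].
    replace (s ^ 3 * (90 / s) ^ 2) with (8100 * s) by (field; lra).
    pose proof (pow2_ge_0 (ut s t)); lra. }
  rewrite <- (Rabs_pos_eq (90 / s)) by (apply Rlt_le, Rdiv_lt_0_compat; lra).
  apply Rsqr_le_abs_0; rewrite !Rsqr_pow2; exact Hsq.
Qed.

Lemma ut_bound s t : 0 < s -> Rabs (ut s t) <= 90 * sqrt s.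
Proof.
  intro Hs; pose proof (gradient_estimate s t Hs) as Hgrad; unfold Q in Hgrad.
  assert (Hsq : ut s t ^ 2 <= (90 * sqrt s) ^ 2).
  { rewrite Rpow_mult_distr, pow2_sqrt by lra.
    assert (0 <= s ^ 3 * us s t ^ 2) by (apply Rmult_le_pos; [apply pow_le; lra | apply pow2_ge_0]).
    lra. }
  rewrite <- (Rabs_pos_eq (90 * sqrt s)) by (apply Rmult_le_pos; [lra | apply sqrt_pos]).
  apply Rsqr_le_abs_0; rewrite !Rsqr_pow2; exact Hsq.
Qed.

(* In the variable [ln s] the bound [|us| <= 90 / s] becomes a Lipschitz bound. *)
Lemma ln_lipschitz_s s s' t : 0 < s -> 0 < s' ->
  Rabs (ln (D 0 0 s t) - ln (D 0 0 s' t)) <= 90 * Rabs (ln s - ln s').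
Proof.
  intros Hs Hs'.
  destruct (MVT_abs (fun r => ln (D 0 0 (exp r) t)) (fun r => exp r * us (exp r) t) (ln s') (ln s))
    as [c [Hmvt _]].
  { intros c _; apply is_derive_Reals.
    pose proof (exp_pos c); pose proof (Hpos (exp c) t (exp_pos c)).
    auto_derive; [repeat split; [apply ex_derive_jet_s |]; lra |].
    rewrite Derive_jet_s by lra; unfold us; field; lra. }
  rewrite !exp_ln in Hmvt by assumption; rewrite Hmvt.
  apply Rmult_le_compat_r; [apply Rabs_pos |].
  pose proof (exp_pos c) as Hc; pose proof (us_bound (exp c) t Hc) as Hbound.
  rewrite Rabs_mult, Rabs_pos_eq by lra.
  apply Rle_trans with (exp c * (90 / exp c)); [apply Rmult_le_compat_l; lra | right; field; lra].
Qed.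

Lemma ln_lipschitz_t s t t' : 0 < s ->
  Rabs (ln (D 0 0 s t) - ln (D 0 0 s t')) <= 90 * sqrt s * Rabs (t - t').
Proof.
  intro Hs.
  destruct (MVT_abs (fun y => ln (D 0 0 s y)) (fun y => ut s y) t' t) as [c [Hmvt _]].
  { intros c _; apply is_derive_Reals; pose proof (Hpos s c Hs).
    auto_derive; [repeat split; [apply ex_derive_jet_t |]; lra |].
    rewrite Derive_jet_t by lra; unfold ut; field; lra. }
  rewrite Hmvt; apply Rmult_le_compat_r; [apply Rabs_pos | now apply ut_bound].
Qed.

(* Go down to height [s0 / (1 + s0 (t - t0)^2)], where crossing from [t0] to [t] costs at most
   [90], and back up. *)
Lemma ln_harnack s0 t0 t : 0 < s0 ->
  ln (D 0 0 s0 t0) - 90 - 180 * ln (1 + s0 * (t - t0) ^ 2) <= ln (D 0 0 s0 t).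
Proof.
  intro Hs0.
  set (X := s0 * (t - t0) ^ 2).
  assert (HX : 0 <= X) by (apply Rmult_le_pos; [lra | apply pow2_ge_0]).
  set (s1 := s0 / (1 + X)).
  assert (Hs1 : 0 < s1) by (apply Rdiv_lt_0_compat; lra).
  assert (Hln : Rabs (ln s0 - ln s1) = ln (1 + X)).
  { unfold s1; rewrite ln_div by lra.
    replace (ln s0 - (ln s0 - ln (1 + X))) with (ln (1 + X)) by ring.
    apply Rabs_pos_eq; rewrite <- ln_1; apply ln_le; lra. }
  assert (Hcross : sqrt s1 * Rabs (t - t0) <= 1).
  { rewrite <- sqrt_Rsqr_abs, <- sqrt_mult_alt by lra; rewrite <- sqrt_1.
    apply sqrt_le_1_alt; unfold s1, Rsqr.
    apply (Rmult_le_reg_l (1 + X)); [lra |].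
    replace ((1 + X) * (s0 / (1 + X) * ((t - t0) * (t - t0)))) with (s0 * (t - t0) ^ 2)
      by (field; lra).
    fold X; lra. }
  pose proof (ln_lipschitz_s s0 s1 t Hs0 Hs1) as Hdown.
  pose proof (ln_lipschitz_s s0 s1 t0 Hs0 Hs1) as Hup.
  pose proof (ln_lipschitz_t s1 t t0 Hs1) as Hacross.
  rewrite Hln in Hdown, Hup.
  apply Rabs_le_between in Hdown, Hup, Hacross.
  assert (90 * sqrt s1 * Rabs (t - t0) <= 90) by nra.
  lra.
Qed.

End PositiveSolution.

(** * Nonnegative solutions *)

Definition shift_jets (D : nat -> nat -> R -> R -> R) (e : R) (i j : nat) : R -> R -> R :=
  match i, j with
  | O, O => fun s t => D O O s t + e
  | _, _ => D i j
  end.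

Lemma derivable_pt_lim_plus_const (g : R -> R) (x l e : R) :
  derivable_pt_lim g x l -> derivable_pt_lim (fun y => g y + e) x l.
Proof.
  intro Hg; rewrite <- (Rplus_0_r l).
  apply (derivable_pt_lim_plus g (fun _ => e)); [exact Hg | apply derivable_pt_lim_const].
Qed.

Lemma continuous2_at_plus_const (g : R -> R -> R) (s t e : R) :
  continuous2_at g s t -> continuous2_at (fun u v => g u v + e) s t.
Proof.
  intros Hg eps Heps; destruct (Hg eps Heps) as [delta [Hdelta Hclose]].
  exists delta; split; [exact Hdelta |]; intros s' t' Hs' Ht'.
  replace (g s' t' + e - (g s t + e)) with (g s' t' - g s t) by ring.
  now apply Hclose.
Qed.

Lemma jets_on_half_plane_shift D e : jets_on_half_plane D -> jets_on_half_plane (shift_jets D e).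
Proof.
  intros HD [|i] [|j] s t Hs; try exact (HD _ _ s t Hs).
  destruct (HD O O s t Hs) as [Hds [Hdt Hcont]].
  split; [| split].
  - now apply derivable_pt_lim_plus_const.
  - now apply derivable_pt_lim_plus_const.
  - now apply continuous2_at_plus_const.
Qed.

Definition harnack_factor (X : R) : R := exp (-90 - 180 * ln (1 + X)).

Lemma harnack_nonneg f D s0 t0 t :
  smooth_on_half_plane f D -> (forall s t, 0 < s -> 0 <= f s t) ->
  (forall s t, 0 < s -> s ^ 3 * D 2%nat 0%nat s t + D 0%nat 2%nat s t = 0) -> 0 < s0 ->
  f s0 t0 * harnack_factor (s0 * (t - t0) ^ 2) <= f s0 t.
Proof.
  intros [Hf HD] Hnn Hpde Hs0.
  apply Rle_plus_epsilon; intros e He.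
  assert (Hpos : forall s t, 0 < s -> 0 < shift_jets D e 0 0 s t)
    by (intros s t1 Hs; cbv [shift_jets]; rewrite Hf by exact Hs; pose proof (Hnn s t1 Hs); lra).
  pose proof (ln_harnack (shift_jets D e) (jets_on_half_plane_shift D e HD) Hpos Hpde s0 t0 t Hs0)
    as Hln.
  cbv [shift_jets] in Hln; rewrite !Hf in Hln by exact Hs0.
  pose proof (Hnn s0 t0 Hs0); pose proof (Hnn s0 t Hs0).
  assert (Hk : 0 < harnack_factor (s0 * (t - t0) ^ 2)) by apply exp_pos.
  apply Rle_trans with ((f s0 t0 + e) * harnack_factor (s0 * (t - t0) ^ 2)); [nra |].
  rewrite <- (exp_ln (f s0 t + e)), <- (exp_ln (f s0 t0 + e)) by lra.
  unfold harnack_factor; rewrite <- exp_plus.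
  destruct (Rle_lt_or_eq_dec _ _ Hln) as [Hlt | Heq];
    [left; apply exp_increasing; lra | right; f_equal; lra].
Qed.

Lemma harnack_factor_bound X Y : 0 <= X <= Y ->
  / Rpower (2 + Y) 360 <= harnack_factor X.
Proof.
  intro HXY; unfold Rpower, harnack_factor; rewrite <- exp_Ropp.
  left; apply exp_increasing.
  assert (ln (1 + X) <= ln (2 + Y)) by (apply ln_le; lra).
  assert (ln 2 <= ln (2 + Y)) by (apply ln_le; lra).
  pose proof ln_lt_2; lra.
Qed.

Lemma sq_dist_le_of_between (M t0 t : R) : Rmin M t0 <= t <= Rmax M t0 ->
  (t - t0) ^ 2 <= (t0 - M) ^ 2 /\ (t - M) ^ 2 <= (t0 - M) ^ 2.
Proof.
  rewrite <- !(pow2_abs (t0 - M)), <- (pow2_abs (t - t0)), <- (pow2_abs (t - M)).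
  unfold Rmin, Rmax; destruct Rle_dec; intro Ht;
    split; apply pow_incr; unfold Rabs; repeat destruct Rcase_abs; lra.
Qed.

Theorem proposition4p5 :
  exists c : R, 1 <= c /\
  forall (f : R -> R -> R) (D : nat -> nat -> R -> R -> R),
    smooth_on_half_plane f D ->
    (forall s t, 0 < s -> 0 <= f s t) ->
    (forall s t, 0 < s -> s ^ 3 * D 2%nat 0%nat s t + D 0%nat 2%nat s t = 0) ->
    forall s0 t0 M : R, 0 < s0 -> M <> t0 ->
    forall t : R, Rmin M t0 <= t <= Rmax M t0 ->
      f s0 t >= f s0 t0 / Rpower (2 + s0 * (t0 - M) ^ 2) c
                 * ((t - M) ^ 2 / (t0 - M) ^ 2).
Proof.
  exists 360; split; [lra |].
  intros f D Hsmooth Hnn Hpde s0 t0 M Hs0 HM t Ht.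
  pose proof (sq_dist_le_of_between M t0 t Ht) as Hbetween.
  assert (Hd : 0 < (t0 - M) ^ 2) by (apply pow2_gt_0; lra).
  assert (Hratio : 0 <= (t - M) ^ 2 / (t0 - M) ^ 2 <= 1).
  { split; [apply Rdiv_le_0_compat; [apply pow2_ge_0 | exact Hd] |].
    apply (Rmult_le_reg_r ((t0 - M) ^ 2)); [exact Hd |].
    unfold Rdiv; rewrite Rmult_assoc, Rinv_l, Rmult_1_r, Rmult_1_l by lra; apply Hbetween. }
  pose proof (harnack_nonneg f D s0 t0 t Hsmooth Hnn Hpde Hs0) as Hharnack.
  pose proof (harnack_factor_bound (s0 * (t - t0) ^ 2) (s0 * (t0 - M) ^ 2)) as Hfactor.
  assert (Hsq : 0 <= s0 * (t - t0) ^ 2 <= s0 * (t0 - M) ^ 2).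
  { split; [apply Rmult_le_pos; [lra | apply pow2_ge_0] |].
    apply Rmult_le_compat_l; [lra | apply Hbetween]. }
  specialize (Hfactor Hsq).
  assert (Hinv : 0 < / Rpower (2 + s0 * (t0 - M) ^ 2) 360) by (apply Rinv_0_lt_compat, exp_pos).
  pose proof (Hnn s0 t0 Hs0).
  apply Rle_ge; unfold Rdiv at 1; rewrite Rmult_assoc.
  apply Rle_trans with (f s0 t0 * harnack_factor (s0 * (t - t0) ^ 2)); [| exact Hharnack].
  apply Rmult_le_compat_l; [lra | nra].
Qed.
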